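(* Let $G$ be a finite perfect graph. Then $G$ is symmetric with respect to graph entropy (i.e., the uniform distribution on $V(G)$ maximizes $H(G,P)$ over all probability distributions $P$ on $V(G)$) if and only if $V(G)$ can be partitioned into vertex sets of pairwise disjoint cliques of $G$, each of size $\omega(G)$ (the maximum clique size of $G$).
   Context: For a finite graph $G$ with $V(G)=\{1,\dots,n\}$, the vertex packing polytope $VP(G)\subseteq\mathbb{R}^n$ is the convex hull of the characteristic vectors of the independent sets of $G$. For a probability distribution $P=(p_1,\dots,p_n)$ on $V(G)$, the graph entropy is $H(G,P)=\min_{\mathbf a\in VP(G)}\sum_{i=1}^n p_i\log(1/a_i)$. A graph is called symmetric with respect to graph entropy if the uniform distribution on its vertex set attains $\max_P H(G,P)$. *)

From HB Require Import structures.
From mathcomp Require Import all_boot all_order all_algebra.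
From mathcomp Require Import all_classical all_reals.
From mathcomp Require Import ereal exp.

Set Implicit Arguments.
Unset Strict Implicit.
Unset Printing Implicit Defensive.

Import Order.TTheory GRing.Theory Num.Theory.
Local Open Scope ring_scope.

Section GraphDefs.
Variables (T : finType) (e : rel T).

Definition is_clique (S : {set T}) : bool :=
  [forall x in S, forall y in S, (x != y) ==> e x y].

Definition is_stable (S : {set T}) : bool :=
  [forall x in S, forall y in S, ~~ e x y].

Definition clique_number_in (A : {set T}) : nat :=
  \max_(S : {set T} | (S \subset A) && is_clique S) #|S|.

Definition clique_number : nat := clique_number_in [set: T].

Definition colorable_in (A : {set T}) (k : nat) : bool :=
  [exists f : {ffun T -> 'I_#|T|.+1},
     [forall x in A, (f x < k)%N] &&
     [forall x in A, forall y in A, e x y ==> (f x != f y)]].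

Definition chromatic_number_in (A : {set T}) : nat :=
  \big[minn/#|T|]_(k < #|T|.+1 | colorable_in A k) k.

Definition perfect : Prop :=
  forall A : {set T}, chromatic_number_in A = clique_number_in A.

End GraphDefs.

Section Entropy.
Variables (R : realType) (T : finType) (e : rel T).

Definition prob_dist (p : T -> R) : Prop :=
  (forall x, 0 <= p x) /\ \sum_(x : T) p x = 1.

(* vertex packing polytope: convex hull of characteristic vectors of
   independent sets, written as the set of convex combinations *)
Definition VP : set (T -> R) :=
  [set a | exists lam : {set T} -> R,
     [/\ forall S, 0 <= lam S,
         \sum_(S : {set T}) lam S = 1,
         forall S, ~~ is_stable e S -> lam S = 0 &
         forall x, a x = \sum_(S : {set T}) lam S * (x \in S)%:R]].

Definition ent_term (p a : R) : \bar R :=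
  if p == 0 then 0%E
  else if a == 0 then +oo%E
  else (p * ln (a^-1))%:E.

Definition graph_entropy (p : T -> R) : \bar R :=
  ereal_inf [set (\sum_(x : T) ent_term (p x) (a x))%E | a in VP].

Definition uniform_dist : T -> R := fun _ => (#|T|%:R)^-1.

Definition entropy_symmetric : Prop :=
  forall p : T -> R, prob_dist p ->
    (graph_entropy p <= graph_entropy uniform_dist)%E.

End Entropy.

From HB Require Import structures.
From mathcomp Require Import all_boot all_order all_algebra.
From mathcomp Require Import all_classical all_reals.
From mathcomp Require Import ereal exp.
From mathcomp Require Import fintype finset.
From mathcomp Require Import ring lra.

(* Perfection gives every induced subgraph a proper colouring with omega
   colours, and by Lovasz's replication argument so does every blow-up of the
   graph in which vertices are replaced by cliques of twins.  Counting the
   vertices of a suitable blow-up shows that every nonempty induced subgraph has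
   a clique meeting all its maximum stable sets, hence V(G) is covered by alpha
   cliques; when alpha * omega <= n these cliques all have size omega.

   The constant vector 1/omega, the average of the indicators of the omega
   colour classes, lies in VP(G); so H(G,P) <= log omega for every P.  If V(G)
   is partitioned into omega-cliques, every a in VP(G) has sum_x a_x <= n/omega,
   so H(G,U) >= log omega.  Conversely, symmetry gives H(G,U) >= H(G,P_K) =
   log omega for P_K uniform on a maximum clique K; but if alpha * omega > n,
   moving the point 1/omega of VP(G) slightly towards the indicator of a
   maximum stable set brings sum_x log(1/a_x)/n below log omega. *)

Set Implicit Arguments.
Unset Strict Implicit.
Unset Printing Implicit Defensive.

Section MaxCard.
Variables (V : finType) (P : pred {set V}).
Hypothesis P0 : P set0.

Definition max_card_in (A : {set V}) : nat :=
  \max_(S : {set V} | (S \subset A) && P S) #|S|.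

Lemma max_card_in_ge (A S : {set V}) : S \subset A -> P S -> #|S| <= max_card_in A.
Proof. by move=> SA PS; rewrite /max_card_in (bigD1 S) ?SA ?PS //= leq_maxl. Qed.

Lemma max_card_in_witness (A : {set V}) :
  exists S : {set V}, [/\ S \subset A, P S & #|S| = max_card_in A].
Proof.
have : 0 < #|[pred S : {set V} | (S \subset A) && P S]|.
  by apply/card_gt0P; exists set0; rewrite inE sub0set P0.
move/(eq_bigmax_cond (fun S : {set V} => #|S|)) => [S].
by rewrite inE => /andP[SA PS] eqS; exists S.
Qed.

Lemma max_card_in_mono (A B : {set V}) : A \subset B -> max_card_in A <= max_card_in B.
Proof.
move=> AB; have [S [SA PS <-]] := max_card_in_witness A.
exact: max_card_in_ge (subset_trans SA AB) PS.
Qed.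

End MaxCard.

Section CliquesAndStableSets.
Variables (V : finType) (r : rel V).

Definition stability_number_in (A : {set V}) : nat := max_card_in (is_stable r) A.

Lemma cliqueP (S : {set V}) :
  reflect {in S &, forall x y, x != y -> r x y} (is_clique r S).
Proof.
apply: (iffP forall_inP) => [cl x y xS yS | cl x xS].
  by move/forall_inP/(_ y yS)/implyP: (cl x xS).
by apply/forall_inP => y yS; apply/implyP; apply: cl.
Qed.

Lemma stableP (S : {set V}) :
  reflect {in S &, forall x y, ~~ r x y} (is_stable r S).
Proof.
apply: (iffP forall_inP) => [st x y xS yS | st x xS].
  by move/forall_inP/(_ y yS): (st x xS).
by apply/forall_inP => y yS; apply: st.
Qed.

Lemma clique_set0 : is_clique r set0.
Proof. by apply/cliqueP => x; rewrite inE. Qed.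

Lemma clique_set1 (x : V) : is_clique r [set x].
Proof. by apply/cliqueP => y z /set1P -> /set1P ->; rewrite eqxx. Qed.

Lemma stable_set0 : is_stable r set0.
Proof. by apply/stableP => x; rewrite inE. Qed.

Lemma clique_number_in_ge (A S : {set V}) :
  S \subset A -> is_clique r S -> #|S| <= clique_number_in r A.
Proof. exact: max_card_in_ge. Qed.

Lemma clique_number_in_witness (A : {set V}) :
  exists S : {set V}, [/\ S \subset A, is_clique r S & #|S| = clique_number_in r A].
Proof. exact: max_card_in_witness clique_set0 A. Qed.

Lemma clique_number_in_mono (A B : {set V}) :
  A \subset B -> clique_number_in r A <= clique_number_in r B.
Proof. exact: max_card_in_mono clique_set0 A B. Qed.

Lemma clique_number_in_gt0 (A : {set V}) (x : V) : x \in A -> 0 < clique_number_in r A.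
Proof.
by move=> xA; rewrite -(cards1 x) clique_number_in_ge ?sub1set ?clique_set1.
Qed.

Lemma stability_number_in_ge (A S : {set V}) :
  S \subset A -> is_stable r S -> #|S| <= stability_number_in A.
Proof. exact: max_card_in_ge. Qed.

Lemma stability_number_in_witness (A : {set V}) :
  exists S : {set V}, [/\ S \subset A, is_stable r S & #|S| = stability_number_in A].
Proof. exact: max_card_in_witness stable_set0 A. Qed.

Lemma stability_number_in_gt0 (A : {set V}) (x : V) :
  irreflexive r -> x \in A -> 0 < stability_number_in A.
Proof.
move=> r_irr xA; rewrite -(cards1 x) stability_number_in_ge ?sub1set //.
by apply/stableP => y z /set1P -> /set1P ->; rewrite r_irr.
Qed.

Lemma clique_stable_meet (K S : {set V}) :
  is_clique r K -> is_stable r S -> #|K :&: S| <= 1.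
Proof.
move=> /cliqueP Kcl /stableP Sst; rewrite leqNgt; apply/card_gt1P.
move=> [x [y [/setIP[xK xS] /setIP[yK yS] nxy]]].
by move: (Sst x y xS yS); rewrite Kcl.
Qed.

End CliquesAndStableSets.

Section Coloring.
Variables (V : finType) (r : rel V).

Definition coloring_in (A : {set V}) (k : nat) (f : V -> nat) : Prop :=
  {in A, forall x, f x < k} /\ {in A &, forall x y, r x y -> f x != f y}.

Definition clique_colorable : Prop :=
  forall A : {set V}, exists f : V -> nat, coloring_in A (clique_number_in r A) f.

Lemma coloring_in_le (A : {set V}) (k m : nat) (f : V -> nat) :
  k <= m -> coloring_in A k f -> coloring_in A m f.
Proof. by move=> km [fk fprop]; split=> // x /fk /leq_trans; apply. Qed.

Lemma card_color_classes (A : {set V}) (k : nat) (f : V -> nat) :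
  {in A, forall x, f x < k} -> #|A| = \sum_(c < k) #|[set x in A | f x == c]|.
Proof.
move=> fk; rewrite -sum1_card.
rewrite (eq_bigr (fun x => \sum_(c < k) (f x == c))) => [|x xA]; last first.
  rewrite (bigD1 (Ordinal (fk x xA))) //= eqxx big1 // => c xc.
  by apply/eqP; rewrite eqb0; apply: contra xc => /eqP fxc; apply/eqP/val_inj.
rewrite exchange_big; apply: eq_bigr => c _.
rewrite -sum1_card big_mkcond [RHS]big_mkcond /=; apply: eq_bigr => x _.
by rewrite inE; case: (x \in A).
Qed.

Lemma card_le_colors_mul_stability_number (A : {set V}) (k : nat) (f : V -> nat) :
  coloring_in A k f -> #|A| <= k * stability_number_in r A.
Proof.
move=> [fk fprop]; rewrite (card_color_classes fk) -[k in k * _]card_ord -sum_nat_const.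
apply: leq_sum => c _; apply: stability_number_in_ge; first by apply/subsetP => x /setIdP[].
apply/stableP => x y /setIdP[xA /eqP fx] /setIdP[yA /eqP fy].
by apply/negP => /(fprop x y xA yA); rewrite fx fy eqxx.
Qed.

Lemma coloring_add_stable (A D : {set V}) (k : nat) (f : V -> nat) :
  D \subset A -> is_stable r (A :\: D) -> coloring_in D k f ->
  coloring_in A k.+1 (fun y => if y \in D then f y else k).
Proof.
move=> DA /stableP ADst [fk fprop]; split=> [y _|x y xA yA rxy].
  by case: ifP => [/fk/ltnW|].
case: ifPn => xD; case: ifPn => yD; first exact: fprop.
- by rewrite neq_ltn fk.
- by rewrite neq_ltn fk ?orbT.
by move: (ADst x y); rewrite !inE xD yD xA yA rxy => /(_ isT isT).
Qed.

Lemma clique_lt_missing_color (A Q : {set V}) (w c : nat) (f : V -> nat) :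
  coloring_in A w f -> Q \subset A -> is_clique r Q -> c < w ->
  {in Q, forall y, f y != c} -> #|Q| < w.
Proof.
move=> [fw fprop] QA /cliqueP Qcl cw fQc.
have finj : {in Q &, injective f}.
  move=> x y xQ yQ; apply: contra_eq => nxy.
  exact: fprop (subsetP QA x xQ) (subsetP QA y yQ) (Qcl x y xQ yQ nxy).
have : size (c :: map f (enum Q)) <= size (iota 0 w).
  apply: uniq_leq_size => [|z].
    rewrite /= map_inj_in_uniq ?enum_uniq ?andbT => [|x y]; last by rewrite !mem_enum; apply: finj.
    by apply/mapP => -[y]; rewrite mem_enum => /fQc/negPf yc /eqP; rewrite eq_sym yc.
  rewrite inE mem_iota add0n => /predU1P[-> //|/mapP[y]].
  by rewrite mem_enum => /(subsetP QA)/fw fyw ->.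
by rewrite /= size_map size_iota -cardE.
Qed.

End Coloring.

Section PerfectGraphs.
Variables (T : finType) (e : rel T).
Hypothesis e_irr : irreflexive e.

Lemma colorable_in_card (A : {set T}) : colorable_in e A #|T|.
Proof.
apply/existsP; exists [ffun x => widen_ord (leqnSn _) (enum_rank x)].
apply/andP; split; apply/forall_inP => x xA; rewrite ?ffunE //=.
apply/forall_inP => y yA; rewrite !ffunE; apply/implyP.
apply: contraTneq => -[/val_inj/enum_rank_inj ->].
by rewrite e_irr.
Qed.

Lemma colorable_in_chromatic_number (A : {set T}) :
  colorable_in e A (chromatic_number_in e A).
Proof.
apply: (big_ind (colorable_in e A)) => //; first exact: colorable_in_card.
by move=> k l Ak Al; rewrite /minn; case: ifP.
Qed.

Lemma perfect_clique_colorable : perfect e -> clique_colorable e.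
Proof.
move=> eperf A; have /existsP[f /andP[/forall_inP fk /forall_inP fprop]] :=
  colorable_in_chromatic_number A.
rewrite eperf in fk; exists (fun x => val (f x)); split => [x /fk //|x y xA yA exy].
by move/forall_inP/(_ y yA)/implyP: (fprop x xA); apply.
Qed.

End PerfectGraphs.

Section Twins.
Variables (V : finType) (r : rel V).
Hypothesis r_irr : irreflexive r.

Definition twins (u v : V) : Prop :=
  [/\ r u v, r v u & forall y, y != u -> y != v -> r u y = r v y /\ r y u = r y v].

Variables (A : {set V}) (u v : V).
Hypotheses (uA : u \in A) (vA : v \in A) (neq_uv : u != v) (uv_twins : twins u v).

Let A' := A :\ v.

Lemma twin_clique_number_lt (Q : {set V}) :
  Q \subset A' -> is_clique r Q -> #|Q| = clique_number_in r A' -> u \in Q ->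
  clique_number_in r A' < clique_number_in r A.
Proof.
move=> QA' /cliqueP Qcl <- uQ; have [ruv rvu rtw] := uv_twins.
have vQ : v \notin Q by apply: contraTN vA => /(subsetP QA'); rewrite !inE eqxx.
have -> : #|Q|.+1 = #|v |: Q| by rewrite cardsU1 vQ.
apply: clique_number_in_ge; first by rewrite subUset sub1set vA (subset_trans QA') ?subsetDl.
apply/cliqueP => x y /setU1P[->|xQ] /setU1P[->|yQ]; rewrite ?eqxx // => nxy.
- have [-> //|nyu] := eqVneq y u.
  by rewrite -(rtw y nyu _).1 ?Qcl // eq_sym.
- have [-> //|nxu] := eqVneq x u.
  by rewrite -(rtw x nxu _).2 ?Qcl.
exact: Qcl.
Qed.

(* The colour class of u, with u exchanged for its twin v, is a stable set, and
   removing it from A' lowers the clique number since no maximum clique of A'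
   contains u. *)
Lemma twin_coloring_without_max_clique (f : V -> nat) :
  coloring_in r A' (clique_number_in r A') f ->
  (forall Q : {set V},
     Q \subset A' -> is_clique r Q -> #|Q| = clique_number_in r A' -> u \notin Q) ->
  (forall B : {set V}, B \subset A' -> exists g, coloring_in r B (clique_number_in r B) g) ->
  exists g, coloring_in r A (clique_number_in r A') g.
Proof.
set w := clique_number_in r A' => fcol noQ IH; have [fw fprop] := fcol.
have [ruv _ rtw] := uv_twins.
have uA' : u \in A' by rewrite !inE neq_uv.
pose D := A' :\: ([set y in A' | f y == f u] :\ u).
have DA' : D \subset A' by apply: subsetDl.
have ltDw : clique_number_in r D < w.
  have [Q [QD Qcl <-]] := clique_number_in_witness r D.
  have QA' := subset_trans QD DA'.
  have : #|Q| <= w by apply: clique_number_in_ge.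
  rewrite leq_eqVlt => /predU1P[Qw|//].
  apply: (clique_lt_missing_color fcol QA' Qcl (fw u uA')) => y yQ.
  have /setDP[yA'] := subsetP QD y yQ.
  rewrite in_setD1 negb_and negbK in_set yA' /= => /predU1P[yu|//].
  by move: (noQ Q QA' Qcl Qw); rewrite -yu yQ.
have [g gcol] := IH D DA'.
exists (fun y : V => if y \in D then g y else clique_number_in r D).
apply: coloring_in_le ltDw _; apply: coloring_add_stable (subset_trans DA' (subsetDl _ _)) _ gcol.
have outD y : y \in A :\: D -> y = v \/ [/\ y \in A', f y = f u & y != u].
  move=> /setDP[yA yD]; have [->|nyv] := eqVneq y v; [by left | right].
  have yA' : y \in A' by rewrite in_setD1 nyv.
  move: yD; rewrite in_setD yA' andbT negbK in_setD1 in_set yA' => /andP[nyu /eqP fyu].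
  by split.
apply/stableP => x y /outD[->|[xA' fxu nxu]] /outD[->|[yA' fyu nyu]].
- by rewrite r_irr.
- rewrite -(rtw y nyu _).1; last by apply: contraTneq yA' => ->; rewrite !inE eqxx.
  by apply/negP => /(fprop u y uA' yA'); rewrite fyu eqxx.
- rewrite -(rtw x nxu _).2; last by apply: contraTneq xA' => ->; rewrite !inE eqxx.
  by apply/negP => /(fprop x u xA' uA'); rewrite fxu eqxx.
by apply/negP => /(fprop x y xA' yA'); rewrite fxu fyu eqxx.
Qed.

Lemma twin_clique_colorable :
  (forall B : {set V}, B \subset A' -> exists g, coloring_in r B (clique_number_in r B) g) ->
  exists g, coloring_in r A (clique_number_in r A) g.
Proof.
move=> IH; have A'A : A' \subset A by apply: subsetDl.
have [f fcol] := IH A' (subxx _).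
case: (boolP [exists Q : {set V},
   [&& Q \subset A', is_clique r Q, #|Q| == clique_number_in r A' & u \in Q]]).
- case/existsP=> Q /and4P[QA' Qcl /eqP Qw uQ].
  exists (fun y => if y \in A' then f y else clique_number_in r A').
  apply: coloring_in_le (twin_clique_number_lt QA' Qcl Qw uQ) _.
  apply: coloring_add_stable A'A _ fcol.
  have outA' y : y \in A :\: A' -> y = v.
    by case/setDP=> yA; rewrite in_setD1 yA andbT negbK => /eqP.
  by apply/stableP => x y /outA' -> /outA' ->; rewrite r_irr.
- move=> noQ; have [g gcol] : exists g, coloring_in r A (clique_number_in r A') g.
    apply: twin_coloring_without_max_clique fcol _ IH => Q QA' Qcl Qw.
    by apply: contra noQ => uQ; apply/existsP; exists Q; rewrite QA' Qcl Qw eqxx.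
  by exists g; apply: coloring_in_le gcol; apply: clique_number_in_mono.
Qed.

End Twins.

Section Blowup.
Variables (T I : finType) (e : rel T).

Definition blowup : rel (T * I) := fun u v => (u != v) && ((u.1 == v.1) || e u.1 v.1).

Lemma blowup_irr : irreflexive blowup.
Proof. by move=> u; rewrite /blowup eqxx. Qed.

Lemma blowup_twins (u v : T * I) : u.1 = v.1 -> u != v -> twins blowup u v.
Proof.
rewrite /twins /blowup => uv nuv; rewrite nuv [v == u]eq_sym nuv uv eqxx.
by split=> // y nyu nyv; rewrite ![_ == y]eq_sym nyu nyv.
Qed.

Lemma blowup_coloring_fst (A : {set T * I}) (k : nat) (f : T -> nat) :
  {in A &, injective fst} -> coloring_in e (fst @: A) k f ->
  coloring_in blowup A k (fun u => f u.1).
Proof.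
move=> inj [fk fprop]; split=> [u uA|u v uA vA /andP[nuv /predU1P[uv|euv]]].
- exact/fk/imset_f.
- by rewrite (inj u v uA vA uv) eqxx in nuv.
exact: fprop (imset_f _ uA) (imset_f _ vA) euv.
Qed.

Lemma clique_number_in_fst (A : {set T * I}) :
  {in A &, injective fst} -> clique_number_in e (fst @: A) <= clique_number_in blowup A.
Proof.
move=> inj; have [C [CA /cliqueP Ccl <-]] := clique_number_in_witness e (fst @: A).
pose Q := [set u in A | u.1 \in C].
have QA : Q \subset A by apply/subsetP => u /setIdP[].
have -> : C = fst @: Q.
  apply/setP => x; apply/idP/imsetP => [xC|[u /setIdP[_ uC] -> //]].
  by have /imsetP[u uA xu] := subsetP CA x xC; exists u; rewrite // inE uA -xu.
rewrite card_in_imset => [|u v /(subsetP QA) uA /(subsetP QA) vA]; last exact: inj.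
apply: clique_number_in_ge QA _; apply/cliqueP => u v /setIdP[uA uC] /setIdP[vA vC] nuv.
rewrite /blowup nuv Ccl ?orbT //; apply: contra nuv => /eqP uv.
by rewrite (inj u v uA vA uv).
Qed.

Lemma clique_colorable_blowup : clique_colorable e -> clique_colorable blowup.
Proof.
move=> ecol A; elim: {A}_.+1 {-2}A (ltnSn #|A|) => // n IH A leAn.
have [inj|] := boolP [forall u in A, forall v in A, (u.1 == v.1) ==> (u == v)].
  have {}inj : {in A &, injective fst}.
    move=> u v uA vA uv; apply/eqP.
    by move/forall_inP/(_ u uA)/forall_inP/(_ v vA): inj; rewrite uv eqxx.
  have [f fcol] := ecol (fst @: A); exists (fun u => f u.1).
  exact: coloring_in_le (clique_number_in_fst inj) (blowup_coloring_fst inj fcol).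
case/forall_inPn => u uA /forall_inPn[v vA]; rewrite negb_imply => /andP[/eqP uv nuv].
apply: (twin_clique_colorable blowup_irr uA vA nuv (blowup_twins uv nuv)) => B BA.
apply: IH; rewrite -ltnS (leq_trans _ leAn) // ltnS; apply: proper_card.
by apply: (sub_proper_trans BA); rewrite properD1.
Qed.

End Blowup.

Lemma card_dep_pairs (I J : finType) (P : {set J}) (S : J -> {set I}) :
  #|[set u : I * J | (u.2 \in P) && (u.1 \in S u.2)]| = \sum_(j in P) #|S j|.
Proof.
set H := [set u : I * J | _].
rewrite -sum1_card [LHS]big_mkcond (eq_bigr (fun u => ((u.1, u.2) \in H) : nat)) => [|[//]].
rewrite -(pair_bigA _ (fun x j => ((x, j) \in H) : nat)) exchange_big [RHS]big_mkcond /=.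
apply: eq_bigr => j _; case: (boolP (j \in P)) => jP.
  by rewrite -sum1_card [RHS]big_mkcond; apply: eq_bigr => x _; rewrite inE /= jP.
by apply: big1 => x _; rewrite inE /= (negPf jP).
Qed.

Section Replication.
Variables (T : finType) (e : rel T).
Hypothesis e_irr : irreflexive e.
Variables (A : {set T}) (sel : {set T} -> {set T}).

Let cliques := [set K : {set T} | (K \subset A) && is_clique e K].

Hypothesis sel_max_stable : {in cliques, forall K,
  [/\ sel K \subset A, is_stable e (sel K), #|sel K| = stability_number_in e A
    & [disjoint K & sel K]]}.

(* Each x in A gets one copy for every clique K whose selected stable set contains x. *)
Let H := [set u : T * {set T} | (u.2 \in cliques) && (u.1 \in sel u.2)].

Let bl := @blowup T {set T} e.

Lemma replication_card : #|H| = #|cliques| * stability_number_in e A.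
Proof.
rewrite card_dep_pairs -sum_nat_const; apply: eq_bigr => K /sel_max_stable.
by case.
Qed.

Lemma replication_clique_number_lt : clique_number_in bl H < #|cliques|.
Proof.
have [Q [QH /cliqueP Qcl <-]] := clique_number_in_witness bl H.
have inQ u : u \in Q -> u.2 \in cliques /\ u.1 \in sel u.2.
  by move/(subsetP QH); rewrite inE => /andP[].
pose C := fst @: Q.
have C_clique : C \in cliques.
  rewrite inE; apply/andP; split.
    apply/subsetP => _ /imsetP[u /inQ[/sel_max_stable[selA _ _ _] xsel] ->].
    exact: subsetP selA _ xsel.
  apply/cliqueP => _ _ /imsetP[p pQ ->] /imsetP[q qQ ->] npq.
  have /Qcl : p != q by apply: contraNneq npq => ->.
  by move=> /(_ pQ qQ) /andP[_]; rewrite (negPf npq).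
have inj : {in Q &, injective snd}.
  move=> p q pQ qQ pq; apply/eqP; apply: contraT => npq.
  move: (Qcl p q pQ qQ npq) => /andP[_ /orP[p1q1|]].
    by move: npq; rewrite [p]surjective_pairing [q]surjective_pairing (eqP p1q1) pq eqxx.
  have [/sel_max_stable[_ /stableP selst _ _] psel] := inQ p pQ.
  have [_ qsel] := inQ q qQ; rewrite -pq in qsel.
  by move=> epq; move: (selst _ _ psel qsel); rewrite epq.
rewrite -(card_in_imset inj) (cardsD1 C) C_clique add1n ltnS subset_leq_card //.
apply/subsetP => _ /imsetP[u uQ ->]; have [Ku xK] := inQ u uQ.
rewrite in_setD1 Ku andbT; apply: contraTneq xK => KC.
have /sel_max_stable[_ _ _ /disjointFr dis] := Ku; rewrite dis // KC.
exact: imset_f.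
Qed.

Lemma replication_stable_card (S : {set T * {set T}}) :
  S \subset H -> is_stable bl S -> #|S| <= stability_number_in e A.
Proof.
move=> SH /stableP Sst.
have inj : {in S &, injective fst}.
  move=> p q pS qS pq; apply/eqP; apply: contraT => npq.
  by move: (Sst p q pS qS); rewrite /bl /blowup npq pq eqxx.
rewrite -(card_in_imset inj); apply: stability_number_in_ge.
  apply/subsetP => _ /imsetP[u /(subsetP SH) + ->]; rewrite inE => /andP[Ku xsel].
  by have [selA _ _ _] := sel_max_stable Ku; apply: subsetP selA _ xsel.
apply/stableP => _ _ /imsetP[p pS ->] /imsetP[q qS ->].
have [-> | npq] := eqVneq p q; first by rewrite e_irr.
by move: (Sst p q pS qS); rewrite /bl /blowup npq negb_or => /andP[].
Qed.

Hypothesis ecol : clique_colorable e.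

Lemma replication_stability_number_eq0 : stability_number_in e A = 0.
Proof.
have [f fcol] := clique_colorable_blowup ecol H.
have [S [SH Sst Sc]] := stability_number_in_witness bl H.
have := card_le_colors_mul_stability_number fcol.
rewrite replication_card -Sc => /leq_trans/(_ (leq_mul (leqnn _) (replication_stable_card SH Sst))).
rewrite leq_mul2r leqNgt replication_clique_number_lt orbF.
by case: (stability_number_in e A).
Qed.

End Replication.

Section CliqueCovers.
Variables (T : finType) (e : rel T).
Hypotheses (e_irr : irreflexive e) (ecol : clique_colorable e).

Lemma clique_meets_max_stable (A : {set T}) :
  A != set0 -> exists K : {set T}, [/\ K \subset A, is_clique e K &
    forall S : {set T}, S \subset A -> is_stable e S -> #|S| = stability_number_in e A ->
      ~~ [disjoint K & S]].
Proof.
case/set0Pn => x xA; apply: contrapT => noK.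
pose max_stable_avoiding (K S : {set T}) :=
  [&& S \subset A, is_stable e S, #|S| == stability_number_in e A & [disjoint K & S]].
pose sel K := odflt set0 [pick S | max_stable_avoiding K S].
suff: stability_number_in e A = 0 by move: (stability_number_in_gt0 e_irr xA) => /[swap] ->.
apply: (replication_stability_number_eq0 e_irr (sel := sel)) => // K.
rewrite inE => /andP[KA Kcl]; rewrite /sel; case: pickP => [S /and4P[? ? /eqP ? ?] //|none].
exfalso; apply: noK; exists K; split=> // S SA Sst Sc; apply/negP => dis.
by move: (none S); rewrite /max_stable_avoiding SA Sst Sc eqxx dis.
Qed.

Lemma clique_cover_stability_number (A : {set T}) : exists c : T -> nat,
  {in A, forall x, c x < stability_number_in e A} /\
  {in A &, forall x y, x != y -> c x = c y -> e x y}.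
Proof.
elim: {A}_.+1 {-2}A (ltnSn #|A|) => // n IH A leAn.
have [->|A0] := eqVneq A set0; first by exists (fun _ => 0); split=> x; rewrite inE.
have [K [KA /cliqueP Kcl Kmeets]] := clique_meets_max_stable A0.
have [S0 [S0A S0st S0c]] := stability_number_in_witness e A.
have [x xK] : exists x, x \in K.
  by move: (Kmeets S0 S0A S0st S0c); rewrite -setI_eq0 => /set0Pn[x /setIP[xK _]]; exists x.
have ltA'A : #|A :\: K| < #|A|.
  apply/proper_card/properP; split; first exact: subsetDl.
  by exists x; [exact: subsetP KA x xK | rewrite inE xK].
have [c [cA' cprop]] := IH (A :\: K) (leq_trans ltA'A leAn).
have ltA' : stability_number_in e (A :\: K) < stability_number_in e A.
  have [S [SA' Sst Sc]] := stability_number_in_witness e (A :\: K).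
  have SA : S \subset A := subset_trans SA' (subsetDl A K).
  rewrite -Sc ltn_neqAle stability_number_in_ge // andbT; apply/eqP => /(Kmeets S SA Sst)/negP.
  by apply; move/subsetDP: SA' => [_]; rewrite disjoint_sym.
exists (fun y => if y \in K then 0 else (c y).+1); split=> [y yA|y z yA zA nyz].
  by case: ifP => yK; apply: leq_ltn_trans ltA'; rewrite ?cA' // !inE yK.
case: ifP => yK; case: ifP => zK //; first by move=> _; apply: Kcl.
by move=> [cyz]; apply: cprop; rewrite // !inE ?yK ?zK.
Qed.

Lemma clique_partition_of_card :
  stability_number_in e [set: T] * clique_number e <= #|T| ->
  exists P : {set {set T}}, partition P [set: T] /\
    forall B, B \in P -> is_clique e B /\ #|B| = clique_number e.
Proof.
set a := stability_number_in e _; set w := clique_number e => awT.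
have [c [ca cprop]] := clique_cover_stability_number [set: T].
pose F i := [set x in [set: T] | c x == i].
have Fcl i : is_clique e (F i).
  apply/cliqueP => x y /setIdP[xT /eqP cx] /setIdP[yT /eqP cy] nxy.
  by apply: cprop; rewrite ?cx ?cy.
have Fw i : #|F i| <= w by apply: clique_number_in_ge; rewrite ?subsetT.
have sumF := leqif_sum (P := xpredT) (fun (i : 'I_a) _ => leqif_eq (Fw i)).
rewrite /= sum_nat_const card_ord -(card_color_classes ca) cardsT in sumF.
have /forallP Feq : [forall i : 'I_a, #|F i| == w] by rewrite -sumF.2 eqn_leq awT sumF.1.
exists (preim_partition c [set: T]); split; first exact: preim_partitionP.
move=> _ /imsetP[x _ ->]; have -> : [set y in [set: T] | c x == c y] = F (c x).
  by apply/setP => y; rewrite !inE eq_sym.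
by split=> //; apply/eqP/(Feq (Ordinal (ca x (in_setT x)))).
Qed.

End CliqueCovers.

Import Order.TTheory GRing.Theory Num.Theory.
Local Open Scope ring_scope.

Lemma sum_indicatorM (R : realType) (I : finType) (A : {set I}) (F : I -> R) :
  \sum_i (i \in A)%:R * F i = \sum_(i in A) F i.
Proof.
rewrite [RHS]big_mkcond; apply: eq_bigr => i _.
by case: (i \in A); rewrite ?mul1r ?mul0r.
Qed.

Lemma sum_indicator (R : realType) (I : finType) (A : {set I}) :
  \sum_i ((i \in A)%:R : R) = #|A|%:R.
Proof.
rewrite -(eq_bigr _ (fun i _ => mulr1 _)) sum_indicatorM sumr_const.
by rewrite -[_ *+ _]mulr_natr mul1r.
Qed.

Section VertexPacking.
Variables (R : realType) (T : finType) (e : rel T).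

Lemma VP_ge0 (a : T -> R) (x : T) : VP e a -> 0 <= a x.
Proof.
case=> lam [lam0 _ _ ->]; apply: sumr_ge0 => S _.
by apply: mulr_ge0 => //; exact: ler0n.
Qed.

Lemma VP_sum_clique_le1 (a : T -> R) (K : {set T}) :
  VP e a -> is_clique e K -> \sum_(x in K) a x <= 1.
Proof.
case=> lam [lam0 lam1 lam_stable aE] Kcl.
rewrite (eq_bigr _ (fun x _ => aE x)) exchange_big /= -lam1.
apply: ler_sum => S _; rewrite -mulr_sumr.
have [Sst|/lam_stable->] := boolP (is_stable e S); last by rewrite mul0r.
apply: ler_piMr => //; rewrite -sum_indicatorM.
rewrite (eq_bigr (fun x => ((x \in K :&: S) : nat)%:R)) => [|x _]; last first.
  by rewrite inE; case: (x \in K); case: (x \in S); rewrite ?mul1r ?mul0r.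
by rewrite sum_indicator lern1 (clique_stable_meet Kcl Sst).
Qed.

Lemma VP_le1 (a : T -> R) (x : T) : VP e a -> a x <= 1.
Proof. by move=> /VP_sum_clique_le1/(_ (clique_set1 e x)); rewrite big_set1. Qed.

Lemma VP_stable (S : {set T}) : is_stable e S -> VP e (fun x => ((x \in S)%:R : R)).
Proof.
move=> Sst; exists (fun S' => (S' \in [set S])%:R); split.
- by move=> S'; exact: ler0n.
- by rewrite sum_indicator cards1.
- move=> S' /negPf S'st; rewrite inE; apply/eqP; rewrite pnatr_eq0 eqb0.
  by apply: contraFN S'st => /eqP->.
- by move=> x; rewrite sum_indicatorM big_set1.
Qed.

Lemma VP_convex_comb (J : finType) (mu : J -> R) (a : J -> T -> R) :
  (forall j, 0 <= mu j) -> \sum_j mu j = 1 -> (forall j, VP e (a j)) ->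
  VP e (fun x => \sum_j mu j * a j x).
Proof.
move=> mu0 mu1 /choice[lam /all_and4[lam0 lam1 lam_stable aE]].
exists (fun S => \sum_j mu j * lam j S); split.
- by move=> S; apply: sumr_ge0 => j _; apply: mulr_ge0.
- by rewrite exchange_big -mu1; apply: eq_bigr => j _; rewrite -mulr_sumr lam1 mulr1.
- by move=> S Sst; apply: big1 => j _; rewrite lam_stable ?mulr0.
- move=> x; under eq_bigr do rewrite aE mulr_sumr.
  rewrite exchange_big; apply: eq_bigr => S _; rewrite mulr_suml.
  by apply: eq_bigr => j _; rewrite mulrA.
Qed.

Lemma VP_mix (a b : T -> R) (t : R) : VP e a -> VP e b -> 0 <= t <= 1 ->
  VP e (fun x => (1 - t) * a x + t * b x).
Proof.
move=> Va Vb /andP[t0 t1].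
suff -> : (fun x => (1 - t) * a x + t * b x) =
    (fun x => \sum_(j : bool) (if j then t else 1 - t) * (if j then b else a) x).
  apply: VP_convex_comb => [[]||[]] //; rewrite ?subr_ge0 //.
  by rewrite big_bool /= addrC subrK.
by apply: funext => x; rewrite big_bool /= addrC.
Qed.

Lemma VP_const_inv (w : nat) (g : T -> nat) :
  (0 < w)%N -> coloring_in e [set: T] w g -> VP e (fun _ => (w%:R : R)^-1).
Proof.
move=> w_gt0 [gw gprop].
pose C (j : 'I_w) := [set x | g x == j].
have Cst j : is_stable e (C j).
  apply/stableP => x y /[!inE] /eqP gx /eqP gy; apply/negP => /(gprop x y).
  by rewrite !inE gx gy eqxx => /(_ isT isT).
suff -> : (fun _ => (w%:R : R)^-1) = (fun x => \sum_j (w%:R)^-1 * (x \in C j)%:R).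
  apply: VP_convex_comb => [j||j]; last exact: VP_stable.
    by rewrite invr_ge0 ler0n.
  by rewrite sumr_const card_ord -[_ *+ _]mulr_natr mulVf // pnatr_eq0 -lt0n.
apply: funext => x; rewrite -mulr_sumr (bigD1 (Ordinal (gw x (in_setT x)))) //=.
rewrite inE eqxx big1 ?addr0 ?mulr1 // => j.
by rewrite inE -val_eqE eq_sym => /negPf->.
Qed.

Lemma VP_uniform_on_clique_le (K : {set T}) (a : T -> R) :
  VP e a -> is_clique e K ->
  \sum_x (x \in K)%:R / #|K|%:R * a x <= (#|K|%:R)^-1.
Proof.
move=> Va Kcl; under eq_bigr do rewrite mulrAC.
rewrite -mulr_suml sum_indicatorM; apply: ler_piMl; first by rewrite invr_ge0 ler0n.
exact: VP_sum_clique_le1 Va Kcl.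
Qed.

Lemma VP_uniform_le_partition (P : {set {set T}}) (w : nat) (a : T -> R) :
  VP e a -> partition P [set: T] ->
  (forall B, B \in P -> is_clique e B /\ #|B| = w) -> (0 < #|T|)%N ->
  \sum_x @uniform_dist R T x * a x <= (w%:R)^-1.
Proof.
move=> Va Ppart PB T_gt0.
have cardT : #|T| = (#|P| * w)%N.
  by rewrite -cardsT (card_uniform_partition (n := w) _ Ppart) // => B /PB[].
have sum_le : \sum_x a x <= #|P|%:R.
  move: (Ppart) => /and3P[/eqP coverP trivP _].
  rewrite (eq_bigl (mem (cover P))) => [|x]; last by rewrite coverP !inE.
  rewrite big_trivIset // -sum1_card natr_sum; apply: ler_sum => B /PB[Bcl _].
  exact: VP_sum_clique_le1 Va Bcl.
have P_gt0 : (0 : R) < #|P|%:R by move: T_gt0; rewrite cardT muln_gt0 ltr0n => /andP[].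
rewrite -mulr_sumr /uniform_dist cardT natrM invfM mulrAC.
apply: ler_piMl; first by rewrite invr_ge0 ler0n.
by rewrite mulrC ler_pdivrMr // mul1r.
Qed.

End VertexPacking.

Lemma ln_le_subr1 (R : realType) (y : R) : 0 < y -> ln y <= y - 1.
Proof. by move=> y0; have := @le_ln1Dx R (y - 1); rewrite (addrC 1) subrK; apply; lra. Qed.

Lemma ln_two_level_lt (R : realType) (n s w : R) :
  0 < n -> 1 <= w -> 0 <= s <= n -> n + 1 <= s * w ->
  (n - s) * ln ((n * w + 1) / n) + s * ln ((n * w + 1) / (n + 1)) < n * ln w.
Proof.
move=> n0 w1 /andP[s0 sn] sw.
have w0 : 0 < w by lra.
have nw0 : 0 < n * w by apply: mulr_gt0.
have lnw_le (y : R) : 0 < y -> ln (w * y) <= ln w + (y - 1).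
  by move=> y0; rewrite lnM ?posrE // lerD2l ln_le_subr1.
have L1 : ln ((n * w + 1) / n) <= ln w + ((n * w + 1) / (n * w) - 1).
  have -> : (n * w + 1) / n = w * ((n * w + 1) / (n * w)) by field; rewrite !lt0r_neq0.
  by apply: lnw_le; apply: divr_gt0; lra.
have L2 : ln ((n * w + 1) / (n + 1)) <= ln w + ((n * w + 1) / (w * (n + 1)) - 1).
  have -> : (n * w + 1) / (n + 1) = w * ((n * w + 1) / (w * (n + 1))).
    by field; rewrite !lt0r_neq0 //; lra.
  by apply: lnw_le; apply: divr_gt0; [lra | apply: mulr_gt0; lra].
apply: (le_lt_trans (lerD (ler_wpM2l _ L1) (ler_wpM2l s0 L2))); first lra.
have -> : (n - s) * (ln w + ((n * w + 1) / (n * w) - 1)) +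
          s * (ln w + ((n * w + 1) / (w * (n + 1)) - 1)) =
          n * ln w + ((n - s) * (n + 1) + n * s * (1 - w)) / (n * w * (n + 1)).
  by field; rewrite !lt0r_neq0 //; lra.
rewrite gtrDl pmulr_llt0 ?invr_gt0 ?mulr_gt0 //; last lra.
have : n * (n + 1) <= n * (s * w) by rewrite ler_pM2l.
have : 0 < s by nra.
nra.
Qed.

Section GraphEntropy.
Variables (R : realType) (T : finType) (e : rel T).

Lemma ent_term_ge0 (p a : R) : 0 <= p -> 0 <= a <= 1 -> (0 <= ent_term p a)%E.
Proof.
move=> p0 /andP[a0 a1]; rewrite /ent_term; case: ifP => // _; case: eqVneq => // an0.
by rewrite lee_fin mulr_ge0 // ln_ge0 // invf_ge1 // lt_def an0.
Qed.

Lemma ent_termE (p a : R) : p != 0 -> 0 < a -> ent_term p a = (p * ln a^-1)%:E.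
Proof. by move=> /negPf p0 a0; rewrite /ent_term p0 gt_eqF. Qed.

Lemma graph_entropy_le_sum (p a : T -> R) :
  VP e a -> (graph_entropy e p <= \sum_x ent_term (p x) (a x))%E.
Proof. by move=> Va; apply: ereal_inf_lbound; exists a. Qed.

Lemma graph_entropy_le_ln (p : T -> R) (w : nat) :
  (0 < w)%N -> prob_dist p -> VP e (fun _ => (w%:R : R)^-1) ->
  (graph_entropy e p <= (ln w%:R)%:E)%E.
Proof.
move=> w_gt0 [p0 p1] Vw; apply: le_trans (graph_entropy_le_sum p Vw) _.
rewrite (eq_bigr (fun x => (p x * ln w%:R)%:E)) => [|x _]; last first.
  have [->|px] := eqVneq (p x) 0; first by rewrite /ent_term eqxx mul0r.
  by rewrite ent_termE ?invrK // invr_gt0 ltr0n.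
by rewrite sumEFin -mulr_suml p1 mul1r.
Qed.

Lemma ln_le_graph_entropy (p : T -> R) (w : nat) :
  (0 < w)%N -> prob_dist p ->
  (forall a, VP e a -> \sum_x p x * a x <= (w%:R)^-1) ->
  ((ln w%:R)%:E <= graph_entropy e p)%E.
Proof.
move=> w_gt0 [p0 p1] pa_le; apply: le_ereal_inf_tmp => _ [a Va <-].
have a01 x : 0 <= a x <= 1 by rewrite (VP_ge0 x Va) (VP_le1 x Va).
case: (pickP [pred x | (p x != 0) && (a x == 0)]) => [x /andP[px /eqP ax]|hno].
  rewrite (bigD1 x) //= [ent_term _ _]/ent_term (negPf px) ax eqxx addye ?leey //.
  by rewrite -ltNye (lt_le_trans ltNy0) // sume_ge0 // => y _; apply: ent_term_ge0.
have wpos : (0 : R) < w%:R by rewrite ltr0n.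
have ent_bound x : p x * (ln w%:R + 1 - w%:R * a x) <= p x * ln (a x)^-1.
  have [->|px] := eqVneq (p x) 0; first by rewrite !mul0r.
  have ax : 0 < a x.
    by rewrite lt_def (andP (a01 x)).1 andbT; apply: contraFN (hno x) => /= ->; rewrite px.
  apply: ler_wpM2l => //; rewrite lnV ?posrE //.
  by have := ln_le_subr1 (mulr_gt0 wpos ax); rewrite lnM ?posrE //; lra.
rewrite (eq_bigr (fun x => (p x * ln (a x)^-1)%:E)) => [|x _]; last first.
  have [->|px] := eqVneq (p x) 0; first by rewrite /ent_term eqxx mul0r.
  rewrite ent_termE // lt_def (andP (a01 x)).1 andbT.
  by apply: contraFN (hno x) => /= ->; rewrite px.
rewrite sumEFin lee_fin; apply: le_trans (ler_sum _ (fun x _ => ent_bound x)).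
under eq_bigr do rewrite mulrBr mulrCA.
rewrite sumrB -mulr_suml p1 mul1r -mulr_sumr.
have : w%:R * \sum_x p x * a x <= 1.
  by rewrite -[X in _ <= X](mulfV (lt0r_neq0 wpos)) ler_pM2l // pa_le.
lra.
Qed.

Lemma prob_dist_uniform : (0 < #|T|)%N -> prob_dist (@uniform_dist R T).
Proof.
move=> T_gt0; split=> [x|]; first by rewrite invr_ge0 ler0n.
by rewrite sumr_const -[_ *+ _]mulr_natr mulVf // pnatr_eq0 -lt0n.
Qed.

Lemma prob_dist_uniform_on (K : {set T}) :
  (0 < #|K|)%N -> prob_dist (fun x => (x \in K)%:R / (#|K|%:R : R)).
Proof.
move=> K_gt0; split=> [x|]; first by rewrite divr_ge0 ?ler0n.
by rewrite -mulr_suml sum_indicator mulfV // pnatr_eq0 -lt0n.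
Qed.

Lemma graph_entropy_uniform_lt_ln (w : nat) (S : {set T}) :
  (0 < w)%N -> VP e (fun _ => (w%:R : R)^-1) -> is_stable e S -> (#|T| < #|S| * w)%N ->
  (graph_entropy e (@uniform_dist R T) < (ln w%:R)%:E)%E.
Proof.
move=> w_gt0 Vw Sst ltTSw.
have n_gt0 : (0 < #|T|)%N.
  by apply: leq_trans (max_card S); rewrite lt0n; apply: contraTneq ltTSw => ->.
set N : R := #|T|%:R; set W : R := w%:R; set s : R := #|S|%:R.
have N0 : 0 < N by rewrite ltr0n.
have W1 : 1 <= W by rewrite ler1n.
(* Test point a = (1 - t)/w + t 1_S = (n + 1_S)/(n w + 1); ln_two_level_lt
   bounds n times the resulting value of sum_x ln (1/a_x) / n. *)
pose t := (N * W + 1)^-1.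
have t01 : 0 <= t <= 1.
  by rewrite invr_ge0 invf_le1; nra.
pose a x := (1 - t) * W^-1 + t * (x \in S)%:R.
have aE x : a x = (N + (x \in S)%:R) / (N * W + 1).
  by rewrite /a /t; field; apply/andP; split; apply: lt0r_neq0; nra.
apply: le_lt_trans (graph_entropy_le_sum _ (VP_mix Vw (VP_stable R Sst) t01)) _.
rewrite (eq_bigr (fun x => (N^-1 * ln ((N * W + 1) / (N + (x \in S)%:R)))%:E)) => [|x _];
  last first.
  rewrite ent_termE -/(a x) ?aE ?invf_div ?invr_eq0 ?lt0r_neq0 //.
  by rewrite divr_gt0 ?ltr_wpDr //; nra.
rewrite sumEFin lte_fin -mulr_sumr (bigID (mem S)) /=.
rewrite (eq_bigr (fun=> ln ((N * W + 1) / (N + 1)))) => [|x -> //].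
rewrite [X in _ + X](eq_bigl (fun x => x \in ~: S)) => [|x]; last by rewrite !inE.
rewrite [X in _ + X](eq_bigr (fun=> ln ((N * W + 1) / N))) => [|x]; last first.
  by rewrite !inE => /negPf->; rewrite addr0.
rewrite !sumr_const -[_ *+ #|S|]mulr_natr -[_ *+ #|~: S|]mulr_natr -/s.
have -> : #|~: S|%:R = N - s by rewrite /N /s -(cardsC S) natrD addrAC subrr add0r.
rewrite -(ltr_pM2l N0) mulrA mulfV ?mul1r ?lt0r_neq0 // addrC (mulrC _ (N - s)) (mulrC _ s).
apply: ln_two_level_lt => //.
  by rewrite ler0n ler_nat max_card.
by rewrite /N /s /W -natrM natr1 ler_nat.
Qed.

End GraphEntropy.

Theorem mainTheorem2 (R : realType) (T : finType) (e : rel T)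
  (e_sym : symmetric e) (e_irr : irreflexive e)
  (T_nonempty : (0 < #|T|)%N)
  (Hperf : perfect e) :
  entropy_symmetric R e <->
  exists P : {set {set T}},
    finset.partition P [set: T] /\
    (forall B, B \in P -> is_clique e B /\ #|B| = clique_number e).
Proof.
have ecol := perfect_clique_colorable e_irr Hperf.
have /card_gt0P[x0 _] := T_nonempty.
have w_gt0 : (0 < clique_number e)%N := clique_number_in_gt0 e (in_setT x0).
have [g gcol] := ecol [set: T].
have Vw := VP_const_inv R w_gt0 gcol.
split=> [sym | [P [Ppart PB]] p p_dist].
- apply: (clique_partition_of_card e_irr ecol); rewrite leqNgt; apply/negP => ltTaw.
  have [S [_ Sst Sc]] := stability_number_in_witness e [set: T].
  have [K [_ Kcl Kc]] := clique_number_in_witness e [set: T].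
  change (#|K| = clique_number e) in Kc.
  have K_dist := @prob_dist_uniform_on R _ K; rewrite Kc in K_dist.
  have := sym _ (K_dist w_gt0); apply/negP; rewrite -ltNge.
  apply: lt_le_trans (ln_le_graph_entropy w_gt0 (K_dist w_gt0) _).
    by apply: (graph_entropy_uniform_lt_ln w_gt0 Vw Sst); rewrite Sc.
  by move=> a Va; rewrite -Kc; exact: VP_uniform_on_clique_le Va Kcl.
apply: le_trans (graph_entropy_le_ln w_gt0 p_dist Vw) _.
apply: ln_le_graph_entropy w_gt0 (prob_dist_uniform R T_nonempty) _ => a Va.
exact: VP_uniform_le_partition Va Ppart PB T_nonempty.
Qed.
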